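(* States $|\psi\rangle\in H_s$ that cannot be trained by QAOA with target state $|0\rangle^{\otimes n}$ necessarily satisfy \begin{align} A_1=\langle e_1|\psi\rangle \propto \langle 0|^{\otimes n}\mathcal{H}_x|\psi\rangle\propto\langle 0|^{\otimes n}X|\psi\rangle=0,\\ |A_2|=|\langle e_2|\psi\rangle|\le\sqrt{\dfrac{2n}{n-1}}\,|\langle 0|^{\otimes n}|\psi\rangle| . \end{align}
   Context: QAOA on $n$ qubits prepares $|\psi_p(\boldsymbol\gamma,\boldsymbol\beta)\rangle=\prod_{k=1}^p e^{-i\beta_k\mathcal{H}_x}e^{-i\gamma_k|\boldsymbol t\rangle\langle\boldsymbol t|}|+\rangle^{\otimes n}$ with $\mathcal{H}_x=\sum_{i=1}^n X_i$ (Pauli $X$ on qubit $i$), $\gamma_k\in[0,2\pi)$, $\beta_k\in[0,\pi)$; here the target is $|\boldsymbol t\rangle=|0\rangle^{\otimes n}$ and the objective is the overlap $|\langle \boldsymbol t|\psi_p\rangle|^2$. In layerwise training, one layer is added at a time and only the new layer's parameters $(\beta_c,\gamma_c)$ are optimized, so $|\psi_c\rangle=e^{-i\beta_c\mathcal{H}_x}e^{-i\gamma_c|0\rangle^{\otimes n}\langle 0|^{\otimes n}}|\psi_{c-1}\rangle$. $H_s$ is the symmetric subspace, spanned by states invariant under every permutation $P_{ij}$ of two qubits; it has the orthonormal Dicke basis $|e_k\rangle$, $k=0,\dots,n$, where $|e_k\rangle$ is the normalized uniform superposition of all $n$-qubit computational basis states of Hamming weight $k$ (so $|e_0\rangle=|0\rangle^{\otimes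 n}$). All QAOA states with this target lie in $H_s$, and $A_k=\langle e_k|\psi\rangle$. A state ''cannot be trained'' means that applying a further layer $e^{-i\beta\mathcal{H}_x}e^{-i\gamma|0\rangle^{\otimes n}\langle 0|^{\otimes n}}$ and optimizing over $(\beta,\gamma)$ cannot increase the overlap with $|0\rangle^{\otimes n}$, i.e. the function $g(\beta)=\cos^n\beta\,\big(|A_0|+|\sum_{k=1}^n(-i\tan\beta)^kA_k\sqrt{C_n^k}|\big)$ (the overlap modulus already maximized over $\gamma$) has its global maximum at $\beta=0$. *)

From HB Require Import structures.
From mathcomp Require Import all_boot all_order all_algebra.
From mathcomp Require Import complex.
From mathcomp Require Import reals trigo.
Set Implicit Arguments. Unset Strict Implicit. Unset Printing Implicit Defensive.
Import Order.TTheory GRing.Theory Num.Theory.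
Local Open Scope ring_scope.
Local Open Scope complex_scope.

(* Amplitudes A k = <e_k|psi>, k = 0..n, of a state in the symmetric subspace
   expressed in the Dicke basis (values of A at k > n are irrelevant). *)

Definition qaoa_g {R : realType} (n : nat) (A : nat -> R[i]) (beta : R) : R :=
  cos beta ^+ n *
  (Normc.normc (A 0%N) +
   Normc.normc (\sum_(1 <= k < n.+1)
            (- 'i * (tan beta)%:C) ^+ k * A k * (Num.sqrt ('C(n, k))%:R)%:C)).

Definition cannot_be_trained {R : realType} (n : nat) (A : nat -> R[i]) : Prop :=
  forall beta : R, 0 <= beta < pi -> qaoa_g n A beta <= qaoa_g n A 0.

From HB Require Import structures.
From mathcomp Require Import all_boot all_order all_algebra.
From mathcomp Require Import complex.
From mathcomp Require Import reals trigo.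
From mathcomp Require Import ring lra.
Set Implicit Arguments. Unset Strict Implicit. Unset Printing Implicit Defensive.
Import Order.TTheory GRing.Theory Num.Theory.
Local Open Scope ring_scope.
Local Open Scope complex_scope.

(* Put t = tan beta, so that cos^-2 beta = 1 + t^2, and c_k = A_k sqrt(C(n,k)).
   Untrainability at beta = atan t gives, for 0 < t <= 1,
     |A_0| + |sum_(k >= 1) (-i t)^k c_k| <= |A_0| (1 + t^2)^n
                                          = |A_0| (1 + n t^2 + O(t^4)),
   so the series is O(t^2) with t^2-coefficient at most n |A_0|.  Isolating
   its lowest-order term and letting t -> 0 forces c_1 = 0 and then
   |c_2| <= n |A_0|, which is the claim since
   sqrt(2n/(n-1)) sqrt(C(n,2)) = n. *)

Local Notation normc := Normc.normc.

Lemma le0_of_le_mul (R : realFieldType) (x C : R) :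
  (forall t, 0 < t <= 1 -> x <= t * C) -> x <= 0.
Proof.
move=> x_le; apply/ler_addgt0Pr => e e_gt0; rewrite add0r.
have [C_le0 | C_gt0] := lerP C 0.
  by have := x_le 1; rewrite ltr01 lexx mul1r => /(_ isT); lra.
set t := Num.min 1 (e / C).
have t_gt0 : 0 < t by rewrite lt_min ltr01 divr_gt0.
apply: le_trans (x_le t _) _; first by rewrite t_gt0 ge_min lexx.
by rewrite -ler_pdivlMr // ge_min lexx orbT.
Qed.

Lemma expr1D_le_quadratic (R : realFieldType) (n : nat) :
  exists2 K : R, 0 <= K &
    forall x, 0 <= x <= 1 -> (1 + x) ^+ n <= 1 + n%:R * x + K * x ^+ 2.
Proof.
elim: n => [|n [K K_ge0 IH]].
  by exists 0 => // x _; rewrite expr0 !mul0r !addr0.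
exists (n%:R + K + K) => [|x /andP[x_ge0 x_le1]].
  by rewrite !addr_ge0.
have := IH x; rewrite x_ge0 x_le1 => /(_ isT) IHx.
rewrite exprSr -natr1.
have x3_le : K * x ^+ 3 <= K * x ^+ 2 by rewrite ler_wpM2l // ler_wiXn2l.
have := ler_wpM2r (_ : 0 <= 1 + x) IHx; rewrite ?addr_ge0 // => /(_ isT).
rewrite !exprS expr0 !mulr1 in x3_le *; nra.
Qed.

Section ImaginarySeries.
Variable R : rcfType.
Implicit Types (t : R) (c : nat -> R[i]).

Lemma normc_ge0 (x : R[i]) : 0 <= normc x.
Proof. exact: (@normr_ge0 _ (Rcomplex R)). Qed.

Lemma normc_sum_le (m p : nat) (F : nat -> R[i]) :
  normc (\sum_(m <= k < p) F k) <= \sum_(m <= k < p) normc (F k).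
Proof. exact: (@ler_norm_sum _ (Rcomplex R)). Qed.

Lemma normcX (x : R[i]) k : normc (x ^+ k) = normc x ^+ k.
Proof.
elim: k => [|k IH]; first by rewrite !expr0 Normc.normc1.
by rewrite !exprS Normc.normcM IH.
Qed.

Lemma normc_real t : normc t%:C = `|t|.
Proof. by rewrite /= expr0n /= addr0 sqrtr_sqr. Qed.

Lemma normc_mulNi t : 0 <= t -> normc (- 'i * t%:C) = t.
Proof.
move=> t_ge0; rewrite Normc.normcM (normcN (R := R)) normc_real ger0_norm //.
by rewrite /= expr0n /= expr1n add0r sqrtr1 mul1r.
Qed.

Lemma normc_tail_le c t m p : 0 <= t <= 1 ->
  normc (\sum_(m <= k < p) (- 'i * t%:C) ^+ k * c k)
    <= t ^+ m * \sum_(m <= k < p) normc (c k).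
Proof.
case/andP=> t_ge0 t_le1; apply: le_trans (normc_sum_le _ _ _) _.
rewrite mulr_sumr; apply: ler_sum_nat => k /andP[le_mk _].
rewrite Normc.normcM normcX normc_mulNi //.
by rewrite ler_wpM2r ?normc_ge0 ?ler_wiXn2l.
Qed.

Lemma normc_lead_le c t m p : 0 <= t <= 1 -> (m < p)%N ->
  t ^+ m * normc (c m)
    <= normc (\sum_(m <= k < p) (- 'i * t%:C) ^+ k * c k)
       + t ^+ m.+1 * \sum_(m.+1 <= k < p) normc (c k).
Proof.
move=> t01 lt_mp; rewrite (big_ltn lt_mp).
set lead := _ * c m.
set tail := \sum_(m.+1 <= k < p) (- 'i * t%:C) ^+ k * c k.
have -> : t ^+ m * normc (c m) = normc lead.
  by rewrite Normc.normcM normcX normc_mulNi //; case/andP: t01.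
have lead_le : normc lead <= normc (lead + tail) + normc (- tail).
  by rewrite -[X in normc X](addrK tail) le_normcD.
by apply: le_trans lead_le _; rewrite normcN lerD2l normc_tail_le.
Qed.

Lemma normc_lead_coef_le c (m p : nat) (b C : R) :
  (m < p)%N ->
  (forall t, 0 < t <= 1 ->
     normc (\sum_(m <= k < p) (- 'i * t%:C) ^+ k * c k)
       <= t ^+ m * b + t ^+ m.+1 * C) ->
  normc (c m) <= b.
Proof.
move=> lt_mp S_le; rewrite -subr_le0.
set M := \sum_(m.+1 <= k < p) normc (c k).
apply: (@le0_of_le_mul _ _ (C + M)) => t /andP[t_gt0 t_le1].
have t01 : 0 <= t <= 1 by rewrite ltW.
have y_gt0 : 0 < t ^+ m by rewrite exprn_gt0.
rewrite -(ler_pM2l y_gt0).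
have := normc_lead_le c t01 lt_mp; have := S_le t; rewrite t_gt0 t_le1 exprS -/M.
move=> /(_ isT); lra.
Qed.

End ImaginarySeries.

Lemma sqrt_scale_bin2 (R : rcfType) (n : nat) : (2 <= n)%N ->
  Num.sqrt ((2 * n)%:R / n.-1%:R) * Num.sqrt 'C(n, 2)%:R = n%:R :> R.
Proof.
case: n => [|[|m]] // _; rewrite -sqrtrM ?divr_ge0 //.
have bin2E : 'C(m.+2, 2)%:R = (m.+1 * m.+2)%:R / 2 :> R.
  have := mul_bin_left m.+2 1; rewrite bin1 subn1 /= => <-.
  by rewrite natrM mulrC mulKf ?pnatr_eq0.
rewrite bin2E /= !natrM -[X in _ = X]ger0_norm // -sqrtr_sqr; congr Num.sqrt.
by field; rewrite addrC natr1 pnatr_eq0.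
Qed.

Section Untrainable.
Variables (R : realType) (n : nat) (A : nat -> R[i]).
Hypothesis untrained : cannot_be_trained n A.

Definition qaoa_coef k : R[i] := A k * (Num.sqrt 'C(n, k)%:R)%:C.

Lemma normc_qaoa_coef k : normc (qaoa_coef k) = normc (A k) * Num.sqrt 'C(n, k)%:R.
Proof. by rewrite Normc.normcM normc_real ger0_norm ?sqrtr_ge0. Qed.

Lemma qaoa_g0 : qaoa_g n A 0 = normc (A 0%N).
Proof.
rewrite /qaoa_g cos0 tan0 expr1n mul1r.
rewrite big_nat_cond big1 ?Normc.normc0 ?addr0 // => -[|k] /andP[/andP[k_ge1 _] _] //.
by rewrite mulr0 expr0n /= !mul0r.
Qed.

Lemma cannot_be_trained_le_expr t : 0 < t ->
  normc (A 0%N) + normc (\sum_(1 <= k < n.+1) (- 'i * t%:C) ^+ k * qaoa_coef k)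
    <= normc (A 0%N) * (1 + t ^+ 2) ^+ n.
Proof.
move=> t_gt0; under eq_bigr do rewrite mulrA.
have atan_gt0 : 0 < atan t by rewrite -atan0 lt_atan.
have atan_ltpi : atan t < pi.
  by apply: lt_trans (atan_ltpi2 t) _; rewrite ltr_pdivrMr ?ltr_pMr ?ltr1n ?pi_gt0.
have := @untrained (atan t); rewrite ltW //= atan_ltpi qaoa_g0 /qaoa_g atanK => /(_ isT).
have cos_gt0 : 0 < cos (atan t) by rewrite cos_gt0_pihalf // atan_gtNpi2 atan_ltpi2.
have := cos2_tan2 (lt0r_neq0 cos_gt0); rewrite atanK => <-.
rewrite exprVn -exprM mulnC exprM.
have : 0 < cos (atan t) ^+ n by rewrite exprn_gt0.
have : cos (atan t) ^+ n <= 1 by rewrite exprn_ile1 ?cos_le1 ?ltW.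
set d := cos (atan t) ^+ n; set a0 := normc (A 0%N).
have a0_ge0 : 0 <= a0 := normc_ge0 _.
move=> d_le1 d_gt0 le_a0; rewrite -[_ * _^-1]/(_ / _) ler_pdivlMr ?exprn_gt0 //.
rewrite expr2 mulrA; nra.
Qed.

Lemma cannot_be_trained_series_le :
  exists2 C, 0 <= C & forall t, 0 < t <= 1 ->
    normc (\sum_(1 <= k < n.+1) (- 'i * t%:C) ^+ k * qaoa_coef k)
      <= t ^+ 2 * (n%:R * normc (A 0%N)) + t ^+ 3 * C.
Proof.
set a0 := normc (A 0%N); have a0_ge0 : 0 <= a0 := normc_ge0 _.
have [K K_ge0 expr1D_le] := expr1D_le_quadratic R n.
exists (K * a0) => [|t /andP[t_gt0 t_le1]]; first exact: mulr_ge0.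
have t2_01 : 0 <= t ^+ 2 <= 1 by rewrite sqr_ge0 exprn_ile1 // ltW.
have t4_le : t ^+ 4 <= t ^+ 3 by apply: ler_wiXn2l => //; exact: ltW.
have := ler_wpM2l (mulr_ge0 K_ge0 a0_ge0) t4_le.
have := ler_wpM2l a0_ge0 (expr1D_le _ t2_01).
have := cannot_be_trained_le_expr t_gt0.
rewrite -exprM -/a0; lra.
Qed.

End Untrainable.

Theorem proposition1 (R : realType) (n : nat) (A : nat -> R[i]) :
  (2 <= n)%N ->
  cannot_be_trained n A ->
  A 1%N = 0 /\
  Normc.normc (A 2%N) <= Num.sqrt ((2 * n)%:R / (n.-1)%:R) * Normc.normc (A 0%N).
Proof.
move=> n_ge2 untrained; set a0 := normc (A 0%N).
have [C C_ge0 S_le] := cannot_be_trained_series_le untrained.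
have A1_eq0 : A 1%N = 0.
  apply/Normc.eq0_normc/eqP; rewrite eq_le normc_ge0 andbT.
  have : normc (qaoa_coef n A 1) <= 0.
    apply: (@normc_lead_coef_le _ _ 1 n.+1 0 (n%:R * a0 + C)) => [|t t01].
      exact: leqW.
    apply: le_trans (S_le t t01) _.
    rewrite -/a0 mulr0 add0r mulrDr lerD2l ler_wpM2r //.
    by case/andP: t01 => t_gt0 t_le1; apply: ler_wiXn2l => //; exact: ltW.
  by rewrite normc_qaoa_coef bin1 pmulr_lle0 // sqrtr_gt0 ltr0n ltnW.
split=> //.
have A2_le : normc (qaoa_coef n A 2) <= n%:R * a0.
  apply: (normc_lead_coef_le (p := n.+1) (C := C)) => // t t01.
  have := S_le t t01; rewrite big_ltn 1?leqW //.
  by rewrite {1}/qaoa_coef A1_eq0 !mul0r mulr0 add0r.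
have bin2_gt0 : 0 < Num.sqrt 'C(n, 2)%:R :> R by rewrite sqrtr_gt0 ltr0n bin_gt0.
by rewrite -(ler_pM2r bin2_gt0) mulrAC sqrt_scale_bin2 // -normc_qaoa_coef.
Qed.
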